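(* For every $n\in\mathbb{N}$ there is a constant $c_n>0$ such that for all $t\in(0,1/2]$ and all $\lambda_1,\dots,\lambda_n>0$ with $\lambda_1\lambda_2\cdots\lambda_n=1$, $$\sqrt{\sum_{i=1}^n(\lambda_i-1)^2}\le c_nt^{-n}\left(\prod_{i=1}^n\big(t+(1-t)\lambda_i\big)-1\right)+c_nt^{-1/2}\sqrt{\prod_{i=1}^n\big(t+(1-t)\lambda_i\big)-1}.$$ *)

From mathcomp Require Import all_boot all_order all_algebra.
Set Implicit Arguments. Unset Strict Implicit. Unset Printing Implicit Defensive.

From mathcomp Require Import all_boot all_order all_algebra.
From mathcomp Require Import reals exp.
From mathcomp Require Import ring lra.
Set Implicit Arguments. Unset Strict Implicit. Unset Printing Implicit Defensive.
Import Order.TTheory GRing.Theory Num.Theory.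
Local Open Scope ring_scope.

(* Write [a_i = t + (1 - t) lam_i] and [d = \prod_i a_i - 1].  Coordinatewise,
   [t (1 - a_i^(-1/2))^2 <= ln a_i - (1 - t) ln lam_i]; summing and using
   [\sum_i ln lam_i = 0] gives [t \sum_i (1 - a_i^(-1/2))^2 <= ln (\prod_i a_i) <= d].
   If every [a_i <= 4], then [(lam_i - 1)^2 <= 144 (1 - a_i^(-1/2))^2], so the
   distance of [lam] to [1] is at most [12 t^(-1/2) sqrt d].  Otherwise one of the
   summands is at least [1/4], so [t <= 4 d]; as every [a_k >= t], also
   [lam_i <= 2 a_i <= 2 t (1 + d) / t^n], which yields the [t^(-n) d] term. *)

Section Mixture.
Variable R : realType.
Implicit Types (a l t x y : R).

Lemma ln_le_subr1 x : 0 < x -> ln x <= x - 1.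
Proof. by move=> x_gt0; have := @le_ln1Dx R (x - 1); rewrite subrKC; apply; lra. Qed.

Lemma ln_ge_1subV x : 0 < x -> 1 - x^-1 <= ln x.
Proof.
move=> x_gt0; have := @ln_le_subr1 x^-1; rewrite invr_gt0 lnV ?posrE // => /(_ x_gt0).
lra.
Qed.

Lemma ln_prod (I : Type) (r : seq I) (P : pred I) (F : I -> R) :
  (forall i, P i -> 0 < F i) ->
  ln (\prod_(i <- r | P i) F i) = \sum_(i <- r | P i) ln (F i).
Proof.
move=> F_gt0; suff [] : 0 < \prod_(i <- r | P i) F i /\
  ln (\prod_(i <- r | P i) F i) = \sum_(i <- r | P i) ln (F i) by [].
apply: (big_rec2 (fun p s => 0 < p /\ ln p = s)); first by rewrite ln1.
by move=> i p s Pi [p_gt0 <-]; rewrite mulr_gt0 ?lnM ?posrE ?F_gt0.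
Qed.

Lemma sqrtr_le x y : 0 <= y -> x <= y ^+ 2 -> Num.sqrt x <= y.
Proof. by move=> y_ge0 /ler_wsqrtr; rewrite sqrtr_sqr ger0_norm. Qed.

Definition mix t l := t + (1 - t) * l.

Lemma mix_gt0 t l : 0 < t <= 1 -> 0 < l -> 0 < mix t l.
Proof. by move=> /andP[t_gt0 t_le1] l_gt0; apply: ltr_pwDl => //; nra. Qed.

(* [ln (a/l) >= 1 - l/a] and [ln a = 2 ln (sqrt a) >= 2 (1 - 1/sqrt a)], weighted by
   [1 - t] and [t], add up to a perfect square because [(1 - t) l = a - t]. *)
Lemma mix_ln_gap t l : 0 < t <= 1 -> 0 < l ->
  t * (1 - (Num.sqrt (mix t l))^-1) ^+ 2 <= ln (mix t l) - (1 - t) * ln l.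
Proof.
move=> t01 l_gt0; have a_gt0 := mix_gt0 t01 l_gt0; case/andP: t01 => t_gt0 t_le1.
set a := mix t l; set s := Num.sqrt a.
have s_gt0 : 0 < s by rewrite sqrtr_gt0.
have sqr_s : s ^+ 2 = a by rewrite sqr_sqrtr // ltW.
have ln_al : 1 - l / a <= ln a - ln l.
  by rewrite -ln_div ?posrE //; have := ln_ge_1subV (divr_gt0 a_gt0 l_gt0); rewrite invf_div.
have ln_a : 2 * (1 - s^-1) <= ln a.
  by rewrite -sqr_s lnXn //; have := ln_ge_1subV s_gt0; lra.
have la : (1 - t) * (l / a) = 1 - t * s^-1 ^+ 2.
  by rewrite exprVn sqr_s /a /mix; field; rewrite -/(mix t l) lt0r_neq0.
have -> : t * (1 - s^-1) ^+ 2 = t * (2 * (1 - s^-1)) + (1 - t) * (1 - l / a) by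
  rewrite [(1 - t) * (1 - _)]mulrBr la; ring.
have : t * (2 * (1 - s^-1)) <= t * ln a by apply: ler_wpM2l => //; exact: ltW.
have : (1 - t) * (1 - l / a) <= (1 - t) * (ln a - ln l).
  by apply: ler_wpM2l => //; lra.
lra.
Qed.

Lemma sqr_subr1_le_mix t l : 0 <= t <= 2^-1 -> 0 < l -> mix t l <= 4 ->
  (l - 1) ^+ 2 <= 144 * (1 - (Num.sqrt (mix t l))^-1) ^+ 2.
Proof.
move=> /andP[t_ge0 t_le] l_gt0 a_le4.
have a_gt0 : 0 < mix t l by apply: ltr_wpDl => //; nra.
set s := Num.sqrt (mix t l).
have s_gt0 : 0 < s by rewrite sqrtr_gt0.
have sqr_s : s ^+ 2 = mix t l by rewrite sqr_sqrtr // ltW.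
have s_le2 : s <= 2 by nra.
have -> : 1 - s^-1 = (s - 1) / s by field; rewrite lt0r_neq0.
have s_minus1 : (1 - t) * (l - 1) = (s - 1) * (s + 1) by move: sqr_s; rewrite /mix; nra.
rewrite exprMn exprVn mulrA ler_pdivlMr ?exprn_gt0 //.
have : (l - 1) ^+ 2 <= 4 * ((1 - t) * (l - 1)) ^+ 2.
  rewrite exprMn mulrA -[X in X <= _]mul1r ler_wpM2r ?sqr_ge0 //; nra.
rewrite s_minus1 exprMn => le_l.
have sqr_le : ((s + 1) * s) ^+ 2 <= 36.
  have : (s + 1) * s <= 6 by nra.
  have : 0 <= (s + 1) * s by nra.
  nra.
have : 0 <= (s - 1) ^+ 2 by exact: sqr_ge0.
move: sqr_le le_l; rewrite exprMn; move: ((s - 1) ^+ 2) => q; nra.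
Qed.

Lemma sqr_1subVsqrt_ge a : 4 < a -> 4^-1 <= (1 - (Num.sqrt a)^-1) ^+ 2.
Proof.
move=> a_gt4; have s_gt2 : 2 < Num.sqrt a.
  have := sqrtr_ge0 a; have := sqr_sqrtr (ltW (lt_trans _ a_gt4) : 0 <= a); nra.
have : (Num.sqrt a)^-1 < 2^-1 by rewrite ltf_pV2 ?posrE; lra.
have : 0 < (Num.sqrt a)^-1 by rewrite invr_gt0; lra.
move: (Num.sqrt a)^-1 => u; nra.
Qed.

End Mixture.

Section Estimate.
Variable R : realType.
Variables (n : nat) (t : R) (lam : 'I_n -> R).
Hypotheses (t_gt0 : 0 < t) (t_le : t <= 2^-1).
Hypotheses (lam_gt0 : forall i, 0 < lam i) (prod_lam : \prod_i lam i = 1).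

Let a i := mix t (lam i).
Let d := \prod_(i < n) a i - 1.
Let gap i := (1 - (Num.sqrt (a i))^-1) ^+ 2.
Let dist1 := Num.sqrt (\sum_(i < n) (lam i - 1) ^+ 2).

Let t01 : 0 < t <= 1. Proof. by rewrite t_gt0 /=; move: t_le; lra. Qed.
Let a_gt0 i : 0 < a i. Proof. exact: mix_gt0. Qed.

Lemma sum_gap_le : t * \sum_i gap i <= d.
Proof.
have sum_ln_lam : \sum_i ln (lam i) = 0 by rewrite -ln_prod // prod_lam ln1.
apply: le_trans (ln_le_subr1 (prodr_gt0 _ (fun i _ => a_gt0 i))).
have -> : ln (\prod_i a i) = \sum_i (ln (a i) - (1 - t) * ln (lam i)).
  by rewrite ln_prod // sumrB -mulr_sumr sum_ln_lam mulr0 subr0.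
by rewrite mulr_sumr; apply: ler_sum => i _; apply: mix_ln_gap.
Qed.

Lemma d_ge0 : 0 <= d.
Proof.
apply: le_trans sum_gap_le; apply: mulr_ge0; first exact: ltW.
by apply: sumr_ge0 => i _; apply: sqr_ge0.
Qed.

Lemma dist1_le_small_mix : (forall i, a i <= 4) ->
  dist1 <= 12 * (Num.sqrt t)^-1 * Num.sqrt d.
Proof.
move=> a_le4; have st_gt0 : 0 < Num.sqrt t by rewrite sqrtr_gt0.
apply: sqrtr_le.
  by rewrite mulr_ge0 ?sqrtr_ge0 // mulr_ge0 // invr_ge0 ltW.
rewrite !exprMn exprVn (sqr_sqrtr (ltW t_gt0)) (sqr_sqrtr d_ge0).
rewrite mulrAC ler_pdivlMr //.
have sum_le : \sum_i (lam i - 1) ^+ 2 <= 144 * \sum_i gap i.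
  rewrite mulr_sumr; apply: ler_sum => i _.
  by apply: sqr_subr1_le_mix; [rewrite ltW | exact: lam_gt0 | exact: a_le4].
have := ler_wpM2r (ltW t_gt0) sum_le.
have := sum_gap_le; lra.
Qed.

Lemma mix_le_prod i : a i * t ^+ n <= t * \prod_j a j.
Proof.
have n_gt0 : (0 < n)%N by apply: leq_ltn_trans (ltn_ord i).
have prod_t : \prod_(j | j != i) t = t ^+ n.-1 by rewrite prodr_const cardC1 card_ord.
have t_le_prod : t ^+ n.-1 <= \prod_(j | j != i) a j.
  rewrite -prod_t; apply: ler_prod => j _; rewrite ltW //= lerDl mulr_ge0 ?ltW //.
  by move: t_le; lra.
have -> : t ^+ n = t * t ^+ n.-1 by rewrite -exprS prednK.
rewrite (bigD1 i) //= mulrCA.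
by apply: ler_wpM2l; [exact: ltW | apply: ler_wpM2l; [exact: ltW |]].
Qed.

Lemma dist1_le_large_mix j : 4 < a j -> dist1 <= 9 * n%:R * (t ^+ n)^-1 * d.
Proof.
move=> a_j_gt4; have tn_gt0 : 0 < t ^+ n by rewrite exprn_gt0.
have t_le_d : t * 4^-1 <= d.
  apply: le_trans sum_gap_le; apply: ler_wpM2l; first exact: ltW.
  apply: le_trans (sqr_1subVsqrt_ge a_j_gt4) _.
  by rewrite (bigD1 j) //= lerDl sumr_ge0 // => i _; apply: sqr_ge0.
have prod_a : \prod_i a i = d + 1 by rewrite subrK.
set B := 2 * t * \prod_i a i / t ^+ n.
have lam_le i : lam i <= B.
  rewrite ler_pdivlMr //; have := mix_le_prod i.
  have : 0 < lam i * t ^+ n by rewrite mulr_gt0.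
  by move: t_le t_gt0 tn_gt0; rewrite /a /mix; nra.
have B_ge1 : 1 <= B.
  rewrite ler_pdivlMr // mul1r; have := mix_le_prod j.
  by move: a_j_gt4 d_ge0 t_gt0 tn_gt0; rewrite prod_a; nra.
have B_le : B <= 9 * d / t ^+ n.
  apply: ler_wpM2r; first by rewrite invr_ge0 ltW.
  by rewrite prod_a; move: t_le_d t_le d_ge0 t_gt0; nra.
have n_ge1 : 1 <= n%:R :> R by rewrite ler1n; apply: leq_ltn_trans (ltn_ord j).
have -> : 9 * n%:R * (t ^+ n)^-1 * d = n%:R * (9 * d / t ^+ n) by ring.
apply: le_trans (ler_wpM2l (ler0n _ n) B_le).
apply: sqrtr_le; first by rewrite mulr_ge0 ?ler0n //; lra.
apply: (@le_trans _ _ (n%:R * B ^+ 2)).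
  rewrite mulr_natl -[n in _ *+ n]card_ord -sumr_const; apply: ler_sum => i _.
  by have := lam_le i; have := lam_gt0 i; nra.
by rewrite [X in _ <= X]exprMn; apply: ler_wpM2r; [exact: sqr_ge0 | nra].
Qed.

Lemma dist1_le_mix_estimate :
  dist1 <= (9 * n%:R + 12) * (t ^+ n)^-1 * d
           + (9 * n%:R + 12) * (Num.sqrt t)^-1 * Num.sqrt d.
Proof.
have X_ge0 : 0 <= (t ^+ n)^-1 * d by rewrite mulr_ge0 ?d_ge0 // invr_ge0 exprn_ge0 // ltW.
have Y_ge0 : 0 <= (Num.sqrt t)^-1 * Num.sqrt d.
  by rewrite mulr_ge0 ?sqrtr_ge0 // invr_ge0 sqrtr_ge0.
have := mulr_ge0 (ler0n R n) X_ge0; have := mulr_ge0 (ler0n R n) Y_ge0.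
rewrite -!mulrA.
have [/forallP a_le4 | /forallPn [j]] := boolP [forall i, a i <= 4].
  by have := dist1_le_small_mix a_le4; rewrite -mulrA; lra.
rewrite -ltNge => a_j_gt4.
by have := dist1_le_large_mix a_j_gt4; rewrite -!mulrA; lra.
Qed.
End Estimate.

Theorem mainTheorem13 (R : realType) (n : nat) :
  exists c : R, 0 < c /\
  forall (t : R) (lam : 'I_n -> R),
    0 < t -> t <= 2^-1 ->
    (forall i, 0 < lam i) ->
    \prod_(i < n) lam i = 1 ->
    Num.sqrt (\sum_(i < n) (lam i - 1) ^+ 2)
      <= c * (t ^+ n)^-1 * (\prod_(i < n) (t + (1 - t) * lam i) - 1)
         + c * (Num.sqrt t)^-1 * Num.sqrt (\prod_(i < n) (t + (1 - t) * lam i) - 1).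
Proof.
exists (9 * n%:R + 12); split=> [|t lam t_gt0 t_le lam_gt0 prod_lam].
  by have := ler0n R n; lra.
exact: dist1_le_mix_estimate.
Qed.
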